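(* Let $\mathbf L\in\mathbb R_+^{n\times k}$. Then $\mathrm{CCdim}(\mathbf L)\le\operatorname{affdim}(\mathbf L)$.
   Context: Notation: $[m]=\{1,\dots,m\}$; $\Delta_n=\{\mathbf p\in\mathbb R_+^n:\sum_i p_i=1\}$. A loss matrix $\mathbf L\in\mathbb R_+^{n\times k}$ has columns $\boldsymbol\ell_t$, $t\in[k]$. Standing assumption: for each $t\in[k]$ there is $\mathbf p\in\Delta_n$ with $\operatorname{argmin}_{t'}\mathbf p^\top\boldsymbol\ell_{t'}=\{t\}$. $\operatorname{affdim}(\mathbf L)$ is the dimension of the affine hull of $\{\boldsymbol\ell_1,\dots,\boldsymbol\ell_k\}$ (i.e. of the linear subspace parallel to it). A surrogate loss $\boldsymbol\psi:\mathcal C\to\mathbb R_+^n$ ($\mathcal C\subseteq\mathbb R^d$ convex) is $\mathbf L$-calibrated if there is $\mathrm{pred}:\mathcal C\to[k]$ such that for all $\mathbf p\in\Delta_n$: $\inf_{\mathbf u\in\mathcal C:\mathrm{pred}(\mathbf u)\notin\operatorname{argmin}_t\mathbf p^\top\boldsymbol\ell_t}\mathbf p^\top\boldsymbol\psi(\mathbf u)>\inf_{\mathbf u\in\mathcal C}\mathbf p^\top\boldsymbol\psi(\mathbf u)$. $\mathrm{CCdim}(\mathbf L)$ is the smallest $d\in\mathbb Z_+$ for which there exist a convex set $\mathcal C\subseteq\mathbb R^d$ and a convex (componentwise convex) $\mathbf L$-calibrated surrogate $\boldsymbol\psi:\mathcal C\to\mathbb R_+^n$ ($\infty$ if none exists).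 *)

From Stdlib Require Import Reals.
Open Scope R_scope.

(* Vectors in R^m are represented as functions nat -> R; only coordinates < m matter. *)

Fixpoint sumR (m : nat) (f : nat -> R) : R :=
  match m with
  | O => 0
  | S m' => sumR m' f + f m'
  end.

(* A loss matrix L in R_+^{n x k}: entry (i,t) is L i t; column t is fun i => L i t. *)
Definition loss_matrix (n k : nat) (L : nat -> nat -> R) : Prop :=
  forall i t, (i < n)%nat -> (t < k)%nat -> 0 <= L i t.

Definition simplex (n : nat) (p : nat -> R) : Prop :=
  (forall i, (i < n)%nat -> 0 <= p i) /\ sumR n p = 1.

Definition dot (n : nat) (p l : nat -> R) : R := sumR n (fun i => p i * l i).

Definition in_argmin (n k : nat) (L : nat -> nat -> R) (p : nat -> R) (t : nat) : Prop :=
  (t < k)%nat /\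
  forall t', (t' < k)%nat -> dot n p (fun i => L i t) <= dot n p (fun i => L i t').

Definition standing_assumption (n k : nat) (L : nat -> nat -> R) : Prop :=
  forall t, (t < k)%nat ->
    exists p, simplex n p /\ forall t', in_argmin n k L p t' <-> t' = t.

Definition in_span (n m : nat) (f : nat -> nat -> R) (x : nat -> R) : Prop :=
  exists c : nat -> R, forall i, (i < n)%nat -> x i = sumR m (fun j => c j * f j i).

Definition lin_indep (n m : nat) (f : nat -> nat -> R) : Prop :=
  forall c : nat -> R,
    (forall i, (i < n)%nat -> sumR m (fun j => c j * f j i) = 0) ->
    forall j, (j < m)%nat -> c j = 0.

(* direction vectors l_t - l_0, spanning the subspace parallel to the affine hull *)
Definition diffs (L : nat -> nat -> R) : nat -> nat -> R :=
  fun t i => L i t - L i 0%nat.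

(* affdim(L) = m : the linear subspace parallel to aff{l_1..l_k}
   (= span{l_t - l_0}) has a basis of m vectors. *)
Definition is_affdim (n k : nat) (L : nat -> nat -> R) (m : nat) : Prop :=
  exists b : nat -> nat -> R,
    lin_indep n m b /\
    (forall j, (j < m)%nat -> in_span n k (diffs L) (b j)) /\
    (forall t, (t < k)%nat -> in_span n m b (diffs L t)).

Definition is_inf (E : R -> Prop) (x : R) : Prop :=
  (forall y, E y -> x <= y) /\ (forall z, (forall y, E y -> z <= y) -> z <= x).

(* inf B < inf A in the extended reals, for sets bounded below
   (inf of the empty set is +infinity). *)
Definition inf_lt (B A : R -> Prop) : Prop :=
  exists b, is_inf B b /\
    ((forall y, ~ A y) \/ exists a, is_inf A a /\ b < a).

Definition convex_set_in (d : nat) (C : (nat -> R) -> Prop) : Prop :=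
  (forall u, C u -> forall j, (d <= j)%nat -> u j = 0) /\
  (forall u v lam, C u -> C v -> 0 <= lam <= 1 ->
     C (fun j => lam * u j + (1 - lam) * v j)).

Definition convex_surrogate (n d : nat) (C : (nat -> R) -> Prop)
    (psi : (nat -> R) -> nat -> R) : Prop :=
  (forall u i, C u -> (i < n)%nat -> 0 <= psi u i) /\
  (forall u v lam i, C u -> C v -> 0 <= lam <= 1 -> (i < n)%nat ->
     psi (fun j => lam * u j + (1 - lam) * v j) i
       <= lam * psi u i + (1 - lam) * psi v i).

Definition calibrated (n k : nat) (L : nat -> nat -> R) (C : (nat -> R) -> Prop)
    (psi : (nat -> R) -> nat -> R) (pred : (nat -> R) -> nat) : Prop :=
  (forall u, C u -> (pred u < k)%nat) /\
  forall p, simplex n p ->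
    inf_lt (fun y => exists u, C u /\ y = dot n p (psi u))
           (fun y => exists u, C u /\ ~ in_argmin n k L p (pred u) /\ y = dot n p (psi u)).

Definition has_cc_surrogate (n k : nat) (L : nat -> nat -> R) (d : nat) : Prop :=
  exists C psi pred,
    convex_set_in d C /\ convex_surrogate n d C psi /\ calibrated n k L C psi pred.

Definition CCdim_le (n k : nat) (L : nat -> nat -> R) (m : nat) : Prop :=
  exists d, (d <= m)%nat /\ has_cc_surrogate n k L d.

(* Write each column as l_t = l_0 + sum_j a_{tj} b_j for a spanning family b_1, ..., b_m of
   the direction space of aff(L), and use the least-squares surrogate
   psi_i(u) = |u - beta_i|^2 on R^m, where beta_i = (b_1 i, ..., b_m i).  For p in the
   simplex, p^T psi(u) = p^T psi(u_p) + |u - u_p|^2 with u_p = sum_i p_i beta_i, while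
   p^T l_t = p^T l_0 + <a_t, u_p>.  Predicting argmin_t <a_t, u> is therefore exact at
   u_p; if it errs at u, then <a_t' - a_t*, u - u_p> <= -(gap of t') < 0, which forces
   |u - u_p|^2 to exceed a positive constant, uniformly over the finitely many t'. *)

From Stdlib Require Import Reals Lra Lia Arith ClassicalEpsilon Classical.
Open Scope R_scope.

Lemma sumR_ext m f g : (forall i, (i < m)%nat -> f i = g i) -> sumR m f = sumR m g.
Proof. induction m; simpl; intros H; auto. rewrite IHm, (H m); auto. Qed.

Lemma sumR_plus m f g : sumR m (fun i => f i + g i) = sumR m f + sumR m g.
Proof. induction m; simpl; [lra|]. rewrite IHm; ring. Qed.

Lemma sumR_minus m f g : sumR m (fun i => f i - g i) = sumR m f - sumR m g.
Proof. induction m; simpl; [lra|]. rewrite IHm; ring. Qed.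

Lemma sumR_scal m c f : sumR m (fun i => c * f i) = c * sumR m f.
Proof. induction m; simpl; [ring|]. rewrite IHm; ring. Qed.

Lemma sumR_swap n m (f : nat -> nat -> R) :
  sumR n (fun i => sumR m (fun j => f i j)) = sumR m (fun j => sumR n (fun i => f i j)).
Proof.
  induction n; simpl.
  - induction m; simpl; [auto|]. rewrite <- IHm; ring.
  - rewrite IHn, <- sumR_plus. reflexivity.
Qed.

Lemma sumR_le m f g : (forall i, (i < m)%nat -> f i <= g i) -> sumR m f <= sumR m g.
Proof.
  induction m; simpl; intros H; [lra|].
  assert (H1 := H m (Nat.lt_succ_diag_r m)). assert (sumR m f <= sumR m g) by auto. lra.
Qed.

Lemma sumR_nonneg m f : (forall i, (i < m)%nat -> 0 <= f i) -> 0 <= sumR m f.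
Proof.
  intros H. replace 0 with (sumR m (fun _ => 0)).
  - apply sumR_le; auto.
  - induction m; simpl; auto. rewrite IHm; auto; lra.
Qed.

Lemma sumR_sq_nonneg m f : 0 <= sumR m (fun j => f j ^ 2).
Proof. apply sumR_nonneg; intros; apply pow2_ge_0. Qed.

Lemma square_convex x y lam :
  0 <= lam <= 1 -> (lam * x + (1 - lam) * y) ^ 2 <= lam * x ^ 2 + (1 - lam) * y ^ 2.
Proof.
  intros Hl.
  assert (0 <= lam * (1 - lam) * (x - y) ^ 2).
  { apply Rmult_le_pos; [apply Rmult_le_pos|apply pow2_ge_0]; lra. }
  nra.
Qed.

Lemma weighted_sq_dev_decomp n p (y : nat -> R) x :
  sumR n p = 1 ->
  let c := sumR n (fun i => p i * y i) in
  sumR n (fun i => p i * (x - y i) ^ 2) = sumR n (fun i => p i * (c - y i) ^ 2) + (x - c) ^ 2.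
Proof.
  intros Hp c.
  rewrite (sumR_ext n _ (fun i => p i * (c - y i) ^ 2 + (x - c) * (x + c) * p i
                                   - 2 * (x - c) * (p i * y i))) by (intros; ring).
  rewrite sumR_minus, sumR_plus, !sumR_scal, Hp. fold c. ring.
Qed.

(* If <d, w> <= -g with g >= 0 then |w|^2 >= g^2 / (1 + |d|^2): expand
   0 <= |w + lam d|^2 at lam = g / (1 + |d|^2). *)
Lemma sumR_sq_ge_of_inner_le m (w d : nat -> R) g :
  0 <= g -> sumR m (fun j => d j * w j) <= - g ->
  g ^ 2 / (1 + sumR m (fun j => d j ^ 2)) <= sumR m (fun j => w j ^ 2).
Proof.
  intros Hg HS.
  set (W := sumR m (fun j => w j ^ 2)) in *.
  set (S := sumR m (fun j => d j * w j)) in *.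
  set (N := sumR m (fun j => d j ^ 2)) in *.
  assert (HN : 0 <= N) by apply sumR_sq_nonneg.
  set (lam := g / (1 + N)).
  assert (Hlam : 0 <= lam) by (apply Rmult_le_pos; [lra | apply Rlt_le, Rinv_0_lt_compat; lra]).
  assert (Hsq : 0 <= W + 2 * lam * S + lam ^ 2 * N).
  { replace (W + 2 * lam * S + lam ^ 2 * N)
      with (sumR m (fun j => (w j + lam * d j) ^ 2)) by
      (unfold W, S, N; rewrite <- !sumR_scal, <- !sumR_plus; apply sumR_ext; intros; ring).
    apply sumR_sq_nonneg. }
  assert (lam * S <= lam * - g) by (apply Rmult_le_compat_l; lra).
  assert (E : 2 * lam * g - lam ^ 2 * N = g ^ 2 / (1 + N) + lam ^ 2).
  { unfold lam. field. lra. }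
  assert (0 <= lam ^ 2) by apply pow2_ge_0.
  lra.
Qed.

Fixpoint argmin_upto (s : nat -> R) (k : nat) : nat :=
  match k with
  | O => O
  | S k' => let b := argmin_upto s k' in if Rlt_dec (s k') (s b) then k' else b
  end.

Lemma argmin_upto_spec s k : (0 < k)%nat ->
  (argmin_upto s k < k)%nat /\ forall t, (t < k)%nat -> s (argmin_upto s k) <= s t.
Proof.
  induction k as [|[|k] IH]; intros Hk; [lia| |].
  - simpl. destruct (Rlt_dec (s 0%nat) (s 0%nat)); split; try lia;
      intros t Ht; replace t with 0%nat by lia; lra.
  - destruct IH as [IH1 IH2]; [lia|].
    change (argmin_upto s (S (S k))) with
      (if Rlt_dec (s (S k)) (s (argmin_upto s (S k))) then S k else argmin_upto s (S k)).
    destruct (Rlt_dec (s (S k)) (s (argmin_upto s (S k)))) as [Hl|Hl];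
      split; try lia; intros t Ht; destruct (Nat.eq_dec t (S k)); subst; try lra.
    + assert (s (argmin_upto s (S k)) <= s t) by (apply IH2; lia). lra.
    + apply IH2; lia.
Qed.

Lemma finite_pos_lower_bound (f : nat -> R) k :
  exists delta, 0 < delta /\ forall t, (t < k)%nat -> 0 < f t -> delta <= f t.
Proof.
  induction k as [|k [delta [Hd Hf]]].
  - exists 1. split; [lra | intros; lia].
  - destruct (Rlt_dec 0 (f k)) as [Hk|Hk].
    + exists (Rmin delta (f k)). split; [apply Rmin_case; lra|].
      intros t Ht Hft. destruct (Nat.eq_dec t k); subst; [apply Rmin_r|].
      eapply Rle_trans; [apply Rmin_l|]. apply Hf; auto; lia.
    + exists delta. split; auto.
      intros t Ht Hft. destruct (Nat.eq_dec t k); subst; [lra|]. apply Hf; auto; lia.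
Qed.

Lemma inf_or_empty (A : R -> Prop) (l : R) : (forall y, A y -> l <= y) ->
  (forall y, ~ A y) \/ exists a, is_inf A a /\ l <= a.
Proof.
  intros Hl. destruct (classic (exists y, A y)) as [[y0 Hy0]|Hn].
  2:{ left. intros y Hy. apply Hn. eauto. }
  right. set (E := fun x => A (- x)).
  assert (HB : bound E).
  { exists (- l). intros x Hx. apply Hl in Hx. lra. }
  assert (HE : exists x, E x).
  { exists (- y0). unfold E. rewrite Ropp_involutive. auto. }
  destruct (completeness E HB HE) as [s [Hs1 Hs2]].
  assert (Hinf : is_inf A (- s)).
  { split.
    - intros y Hy. assert (E (- y)) by (unfold E; rewrite Ropp_involutive; auto).
      apply Hs1 in H. lra.
    - intros z Hz. assert (s <= - z) by (apply Hs2; intros x Hx; apply Hz in Hx; lra). lra. }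
  exists (- s). split; auto. apply (proj2 Hinf). auto.
Qed.

Lemma inf_lt_of_gap (B A : R -> Prop) M delta :
  B M -> (forall y, B y -> M <= y) -> 0 < delta -> (forall y, A y -> M + delta <= y) ->
  inf_lt B A.
Proof.
  intros HBM HB Hd HA. exists M. split.
  - split; auto.
  - destruct (inf_or_empty A (M + delta) HA) as [Hn|[a [Ha1 Ha2]]]; [left; auto|].
    right. exists a. split; auto. lra.
Qed.

Lemma affdim_coordinates n k L m : is_affdim n k L m ->
  exists (b a : nat -> nat -> R), forall t i, (t < k)%nat -> (i < n)%nat ->
    L i t = L i 0%nat + sumR m (fun j => a t j * b j i).
Proof.
  intros [b [_ [_ Hsp]]]. exists b.
  assert (H : forall t, exists c : nat -> R, (t < k)%nat ->
    forall i, (i < n)%nat -> L i t - L i 0%nat = sumR m (fun j => c j * b j i)).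
  { intros t. destruct (lt_dec t k) as [Ht|Ht].
    - destruct (Hsp t Ht) as [c Hc]. exists c. intros _. apply Hc.
    - exists (fun _ => 0). intros; lia. }
  exists (fun t => proj1_sig (constructive_indefinite_description _ (H t))).
  intros t i Ht Hi.
  destruct (constructive_indefinite_description _ (H t)) as [c Hc]; simpl.
  rewrite <- Hc; auto; ring.
Qed.

Section LeastSquares.

Variables (n k m : nat) (L b a : nat -> nat -> R).

Hypothesis L_coords : forall t i, (t < k)%nat -> (i < n)%nat ->
  L i t = L i 0%nat + sumR m (fun j => a t j * b j i).

Definition supported (u : nat -> R) : Prop := forall j, (m <= j)%nat -> u j = 0.

Definition ls_loss (u : nat -> R) (i : nat) : R := sumR m (fun j => (u j - b j i) ^ 2).

Definition score (u : nat -> R) (t : nat) : R := sumR m (fun j => a t j * u j).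

Definition ls_pred (u : nat -> R) : nat := argmin_upto (score u) k.

Definition barycenter (p : nat -> R) (j : nat) : R :=
  if lt_dec j m then sumR n (fun i => p i * b j i) else 0.

Lemma supported_convex : convex_set_in m supported.
Proof.
  split; [auto|].
  intros u v lam Hu Hv _ j Hj. rewrite (Hu j Hj), (Hv j Hj). ring.
Qed.

Lemma ls_loss_convex : convex_surrogate n m supported ls_loss.
Proof.
  split.
  - intros u i _ _. apply sumR_sq_nonneg.
  - intros u v lam i _ _ Hl _. unfold ls_loss.
    rewrite <- !sumR_scal, <- sumR_plus. apply sumR_le. intros j _.
    replace (lam * u j + (1 - lam) * v j - b j i)
      with (lam * (u j - b j i) + (1 - lam) * (v j - b j i)) by ring.
    apply square_convex; auto.
Qed.

Lemma barycenter_supported p : supported (barycenter p).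
Proof. intros j Hj. unfold barycenter. destruct (lt_dec j m); [lia|auto]. Qed.

Lemma ls_risk_decomp p u : simplex n p ->
  dot n p (ls_loss u) =
  dot n p (ls_loss (barycenter p)) + sumR m (fun j => (u j - barycenter p j) ^ 2).
Proof.
  intros [_ Hp1]. unfold dot, ls_loss.
  assert (Hin : forall v, sumR n (fun i => p i * sumR m (fun j => (v j - b j i) ^ 2))
                = sumR m (fun j => sumR n (fun i => p i * (v j - b j i) ^ 2))).
  { intros v. rewrite <- sumR_swap. apply sumR_ext. intros. symmetry. apply sumR_scal. }
  rewrite !Hin, <- sumR_plus. apply sumR_ext. intros j Hj.
  unfold barycenter. destruct (lt_dec j m) as [_|]; [|lia].
  apply weighted_sq_dev_decomp; auto.
Qed.

Lemma expected_loss_barycenter p t : (t < k)%nat ->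
  dot n p (fun i => L i t) = dot n p (fun i => L i 0%nat) + score (barycenter p) t.
Proof.
  intros Ht. unfold dot, score.
  rewrite (sumR_ext n _ (fun i => p i * L i 0%nat + sumR m (fun j => a t j * (p i * b j i))))
    by (intros i Hi; rewrite (L_coords t i Ht Hi), Rmult_plus_distr_l, <- sumR_scal;
        f_equal; apply sumR_ext; intros; ring).
  rewrite sumR_plus, sumR_swap. f_equal. apply sumR_ext. intros j Hj.
  rewrite sumR_scal. unfold barycenter. destruct (lt_dec j m); [auto|lia].
Qed.

Lemma score_sub_inner u v t t' :
  sumR m (fun j => (a t' j - a t j) * (u j - v j))
  = (score u t' - score u t) - (score v t' - score v t).
Proof.
  unfold score. rewrite <- !sumR_minus. apply sumR_ext. intros; ring.
Qed.

Lemma ls_excess_risk_gap p : (0 < k)%nat -> simplex n p ->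
  exists delta, 0 < delta /\ forall u, ~ in_argmin n k L p (ls_pred u) ->
    dot n p (ls_loss (barycenter p)) + delta <= dot n p (ls_loss u).
Proof.
  intros Hk Hp.
  set (up := barycenter p).
  set (dl := fun t => dot n p (fun i => L i t)).
  destruct (argmin_upto_spec dl k Hk) as [Hts Hmin].
  set (ts := argmin_upto dl k) in *.
  set (N := fun t => sumR m (fun j => (a t j - a ts j) ^ 2)).
  destruct (finite_pos_lower_bound (fun t => (dl t - dl ts) ^ 2 / (1 + N t)) k)
    as [delta [Hd Hdelta]].
  exists delta. split; auto. intros u Hwrong.
  destruct (argmin_upto_spec (score u) k Hk) as [Hpred Hpred_min].
  fold (ls_pred u) in Hpred, Hpred_min. set (t' := ls_pred u) in *.
  set (g := dl t' - dl ts).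
  assert (Hg : 0 < g).
  { destruct (Rlt_dec 0 g) as [|Hng]; auto. exfalso. apply Hwrong. split; auto.
    intros t'' Ht''. assert (dl ts <= dl t'') by auto.
    unfold g in Hng. change (dl t' <= dl t''). lra. }
  assert (Hg_score : g = score up t' - score up ts).
  { unfold g, dl. rewrite (expected_loss_barycenter p t' Hpred),
      (expected_loss_barycenter p ts Hts). fold up. ring. }
  assert (Hinner : sumR m (fun j => (a t' j - a ts j) * (u j - up j)) <= - g).
  { rewrite score_sub_inner. assert (score u t' <= score u ts) by auto. lra. }
  assert (Hbound := sumR_sq_ge_of_inner_le m (fun j => u j - up j)
                      (fun j => a t' j - a ts j) g (Rlt_le _ _ Hg) Hinner).
  assert (HN : 0 <= N t') by apply sumR_sq_nonneg.
  assert (Hdelta_le : delta <= g ^ 2 / (1 + N t')).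
  { apply (Hdelta t' Hpred). fold g. apply Rdiv_lt_0_compat; [apply pow_lt|]; lra. }
  cbv beta in Hbound. unfold N in *. rewrite (ls_risk_decomp p u Hp). fold up. lra.
Qed.

Lemma ls_loss_calibrated : (0 < k)%nat -> calibrated n k L supported ls_loss ls_pred.
Proof.
  intros Hk. split; [intros u _; apply (argmin_upto_spec (score u) k Hk)|].
  intros p Hp.
  destruct (ls_excess_risk_gap p Hk Hp) as [delta [Hd Hgap]].
  apply (inf_lt_of_gap _ _ (dot n p (ls_loss (barycenter p))) delta); auto.
  - exists (barycenter p). split; auto using barycenter_supported.
  - intros y [u [_ ->]]. rewrite (ls_risk_decomp p u Hp).
    assert (0 <= sumR m (fun j => (u j - barycenter p j) ^ 2)) by apply sumR_sq_nonneg. lra.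
  - intros y [u [_ [Hwrong ->]]]. auto.
Qed.

End LeastSquares.

Theorem mainTheorem8 (n k : nat) (L : nat -> nat -> R) (m : nat) :
  (0 < k)%nat ->
  loss_matrix n k L ->
  standing_assumption n k L ->
  is_affdim n k L m ->
  CCdim_le n k L m.
Proof.
  intros Hk _ _ Hdim.
  destruct (affdim_coordinates n k L m Hdim) as [b [a L_coords]].
  exists m. split; [lia|].
  exists (supported m), (ls_loss m b), (ls_pred k m a).
  split; [apply supported_convex|]. split; [apply ls_loss_convex|].
  apply (ls_loss_calibrated n k m L b a L_coords Hk).
Qed.
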